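(* Let $n\ge 3$, let $F$ be a set of edges of $Q_n$, and let $T$ be a proper subset of the vertex set of $Q_n$ with $|T|\ge 3$ and $|T|_0\ge|T|_1$, such that every edge of $Q_n$ joining a vertex of parity 0 in $T$ to a vertex outside $T$ belongs to $F$. Suppose $T$ is partitioned into two sets $T_1,T_2$, each inducing a connected subgraph of $Q_n$ and each balanced ($|T_j|_0=|T_j|_1$ for $j=1,2$), and suppose there are adjacent vertices $v_1\in T_1$, $v_2\in T_2$ such that every path in the subgraph induced by $T$ from $v_1$ to $v_2$ uses the edge $(v_1,v_2)$. Then $F$ is not minimal.
   Context: $Q_n$ is the $n$-dimensional hypercube on the binary strings of length $n$, two strings adjacent iff they differ in exactly one bit. The parity of a vertex is the number of ones in its label modulo 2. For a set $T$ of vertices, $|T|_0$ and $|T|_1$ denote the numbers of vertices of parity 0 and parity 1 in $T$. $F$ is a set of ''faulty'' edges; $Q_n-F$ is the graph with all vertices of $Q_n$ and the edges of $Q_n$ not in $F$. ''$F$ is not minimal'' means that there is a proper subset $F'\subsetneq F$ such that $Q_n-F'$ has no Hamiltonian cycle. *)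

From mathcomp Require Import all_boot.
Set Implicit Arguments. Unset Strict Implicit. Unset Printing Implicit Defensive.

Definition vert (n : nat) : finType := {ffun 'I_n -> bool}.

Definition hadj (n : nat) : rel (vert n) :=
  fun x y => #|[set i | x i != y i]| == 1.

Definition par (n : nat) (x : vert n) : bool := odd #|[set i | x i]|.

Definition cnt0 (n : nat) (T : {set vert n}) : nat := #|[set x in T | ~~ par x]|.
Definition cnt1 (n : nat) (T : {set vert n}) : nat := #|[set x in T | par x]|.

(* Edges of Q_n are represented as two-element vertex sets {x, y}. *)
Definition is_qedge (n : nat) (e : {set vert n}) : bool :=
  [exists x, exists y, hadj x y && (e == [set x; y])].

Definition adjF (n : nat) (F : {set {set vert n}}) : rel (vert n) :=
  fun x y => hadj x y && ([set x; y] \notin F).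

Definition ham_cycle (n : nat) (F : {set {set vert n}}) (c : seq (vert n)) : bool :=
  [&& uniq c, [forall x, x \in c] & cycle (adjF F) c].

Definition hamiltonian (n : nat) (F : {set {set vert n}}) : Prop :=
  exists c, ham_cycle F c.

Definition not_minimal (n : nat) (F : {set {set vert n}}) : Prop :=
  exists F' : {set {set vert n}}, F' \proper F /\ ~ hamiltonian F'.

Definition induced (n : nat) (S : {set vert n}) : rel (vert n) :=
  fun x y => [&& hadj x y, x \in S & y \in S].

Definition induced_connected (n : nat) (S : {set vert n}) : Prop :=
  forall x y, x \in S -> y \in S -> connect (induced S) x y.

From mathcomp Require Import all_boot.
Set Implicit Arguments. Unset Strict Implicit. Unset Printing Implicit Defensive.

(* Since every path from v1 to v2 in T uses the edge v1v2, it is the only edge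
   between T1 and T2; say v1 is even. For n >= 3 a double count of the edges
   between the even and the odd vertices of the balanced set T1 shows that some
   even vertex of T1 has a neighbour outside T, so F contains an edge at an even
   vertex of T1. Deleting from F all edges at even vertices of T1 leaves a proper
   subset F' that still contains every edge from an even vertex of T2 to the
   outside of T2, and since T2 is balanced Q_n - F' has no Hamiltonian cycle. *)

Section Hypercube.
Variable n : nat.
Implicit Types (x y : vert n) (F : {set {set vert n}}).

Definition flip x (i : 'I_n) : vert n :=
  [ffun j => if j == i then ~~ x j else x j].

Lemma flip_inj x : injective (flip x).
Proof.
move=> i k /ffunP/(_ i); rewrite !ffunE eqxx; case: eqP => [//|_].
by case: (x i).
Qed.

Lemma flipC x i j : flip (flip x i) j = flip (flip x j) i.
Proof. by apply/ffunP => l; rewrite !ffunE; case: (l == i); case: (l == j). Qed.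

Lemma hadjP x y : reflect (exists i, y = flip x i) (hadj x y).
Proof.
apply: (iffP cards1P) => [[i /setP Ei] | [i ->]].
  exists i; apply/ffunP => j; rewrite ffunE; have := Ei j; rewrite !inE.
  by case: (j == i); case: (x j); case: (y j).
exists i; apply/setP => j; rewrite !inE ffunE.
by case: (eqVneq j i) => [->|]; [case: (x i) | rewrite eqxx].
Qed.

Lemma hadj_flip x i : hadj x (flip x i).
Proof. by apply/hadjP; exists i. Qed.

Lemma hadj_sym : symmetric (@hadj n).
Proof.
move=> x y; rewrite /hadj; have -> // : [set i | x i != y i] = [set i | y i != x i].
by apply/setP => i; rewrite !inE eq_sym.
Qed.

Lemma card_hadj x : #|[set y | hadj x y]| = n.
Proof.
have -> : [set y | hadj x y] = flip x @: [set: 'I_n].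
  by apply/setP => y; rewrite inE; apply/hadjP/imsetP => -[i]; exists i.
by rewrite card_imset ?cardsT ?card_ord //; apply: flip_inj.
Qed.

Lemma par_flip x i : par (flip x i) = ~~ par x.
Proof.
rewrite /par (cardsD1 i [set j | flip x i j]) (cardsD1 i [set j | x j]) !inE ffunE eqxx.
have -> : [set j | flip x i j] :\ i = [set j | x j] :\ i.
  by apply/setP => j; rewrite !inE ffunE; case: eqP.
by case: (x i); rewrite /= ?negbK.
Qed.

Lemma par_hadj x y : hadj x y -> par y = ~~ par x.
Proof. by case/hadjP => i ->; apply: par_flip. Qed.

Lemma adjF_sym F : symmetric (adjF F).
Proof. by move=> x y; rewrite /adjF hadj_sym setUC. Qed.

End Hypercube.

Lemma subset_of_next_closed (T : finType) (c : seq T) (X : {set T}) x :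
  uniq c -> x \in c -> x \in X -> {homo next c : y / y \in X} -> {subset c <= X}.
Proof.
move=> Uc xc xX nextX y; rewrite -(fconnect_cycle (cycle_next Uc) xc).
by move/iter_findex <-; elim: findex => //= k; apply: nextX.
Qed.

Section EvenBoundary.
Variable n : nat.
Implicit Types (x y : vert n) (S : {set vert n}) (F : {set {set vert n}}).

Definition even_boundary_in F S :=
  forall x y, x \in S -> ~~ par x -> y \notin S -> hadj x y -> [set x; y] \in F.

Lemma adjF_even_boundary F S x y : even_boundary_in F S ->
  x \in S -> ~~ par x -> adjF F x y -> (y \in S) && par y.
Proof.
move=> FS xS px /andP [hxy xyF]; rewrite (par_hadj hxy) px andbT.
by apply: contraR xyF => yS; apply: FS.
Qed.

(* Each even vertex of S has both its cycle neighbours among the odd vertices of S;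
   as these are no more numerous, the cycle cannot leave S. *)
Lemma even_boundary_not_hamiltonian F S x0 z0 :
  x0 \in S -> z0 \notin S -> cnt1 S <= cnt0 S -> even_boundary_in F S ->
  ~ hamiltonian F.
Proof.
move=> x0S z0S le10 FS [c /and3P [Uc /forallP c_all c_cyc]].
pose S0 := [set x in S | ~~ par x]; pose S1 := [set x in S | par x].
have prevS1 x : x \in S0 -> prev c x \in S1.
  rewrite !inE => /andP [xS px]; apply: adjF_even_boundary FS xS px _.
  by rewrite adjF_sym; apply: prev_cycle.
have prevS0 : prev c @: S0 = S1.
  apply/eqP; rewrite eqEcard card_imset; last exact: can_inj (next_prev Uc).
  by rewrite le10 andbT; apply/subsetP => _ /imsetP [x xS0 ->]; apply: prevS1.
have nextS : {homo next c : x / x \in S}.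
  move=> x xS; case px: (par x).
    have : x \in S1 by rewrite inE xS px.
    by rewrite -prevS0 => /imsetP [z zS0 ->]; rewrite next_prev //; case/setIdP: zS0.
  by case/andP: (adjF_even_boundary FS xS (negbT px) (next_cycle c_cyc (c_all x))).
have := subset_of_next_closed Uc (c_all x0) x0S nextS (c_all z0).
by rewrite (negbTE z0S).
Qed.

End EvenBoundary.

Lemma double_counting (T : finType) (A B : {set T}) (r : rel T) :
  \sum_(x in A) #|[set y in B | r x y]| = \sum_(y in B) #|[set x in A | r x y]|.
Proof.
have cardE (C : {set T}) (P : pred T) : #|[set z in C | P z]| = \sum_(z in C) P z.
  by rewrite -sum1dep_card big_mkcondr /=; apply: eq_bigr => z _; case: (P z).
under eq_bigr => x _ do rewrite cardE.
by rewrite exchange_big; apply: eq_bigr => y _; rewrite cardE.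
Qed.

Lemma sum_eq_pred1 (T : finType) (A : {set T}) a :
  a \in A -> \sum_(x in A) (x == a) = 1.
Proof. by move=> aA; rewrite (bigD1 a) //= eqxx big1 // => x /andP [_ /negbTE ->]. Qed.

Lemma two_other_ords m (j : 'I_m) : 3 <= m ->
  exists i k : 'I_m, [/\ i != j, k != j & i != k].
Proof.
move=> m3; have : 1 < #|[set~ j]| by rewrite cardsC1 card_ord ltn_predRL.
by case/card_gt1P => i [k [ij kj ik]]; exists i, k; rewrite !inE in ij kj.
Qed.

Section Degree.
Variable n : nat.
Implicit Types (x y : vert n) (X A B : {set vert n}).

Definition deg_in X x := #|[set y in X | hadj x y]|.

Lemma deg_in_le X x : deg_in X x <= n.
Proof.
by rewrite -(card_hadj x); apply/subset_leq_card/subsetP => y; rewrite !inE => /andP [].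
Qed.

Lemma deg_in_lt X x y : hadj x y -> y \notin X -> deg_in X x < n.
Proof.
move=> hxy yX; rewrite -(card_hadj x); apply: proper_card; apply/properP; split.
  by apply/subsetP => z; rewrite !inE => /andP [].
by exists y; rewrite !inE ?hxy // (negbTE yX).
Qed.

Lemma deg_in_ge X x w :
  (forall y, hadj x y -> y != w -> y \in X) -> n <= deg_in X x + hadj x w.
Proof.
move=> nbX; rewrite -{1}(card_hadj x) (cardsD1 w) inE addnC leq_add2r.
apply: subset_leq_card; apply/subsetP => y; rewrite !inE => /andP [yw hxy].
by rewrite hxy nbX.
Qed.

Lemma sum_deg_in A B : \sum_(x in A) deg_in B x = \sum_(y in B) deg_in A y.
Proof.
rewrite double_counting; apply: eq_bigr => y _; apply: eq_card => x.
by rewrite !inE hadj_sym.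
Qed.

End Degree.

Section UniqueCrossEdge.
Variable n : nat.
Implicit Types (x y : vert n) (Ta Tb : {set vert n}) (F : {set {set vert n}}).

Definition unique_cross_edge Ta Tb v w :=
  forall a b, a \in Ta -> b \in Tb -> hadj a b -> a = v /\ b = w.

(* Otherwise the even vertices of Ta send n |Ta|_0 - 1 edges into the odd ones,
   which receive at most n |Ta|_1 - 2: two neighbours of v also see a neighbour
   of w, which cannot be even in Ta. *)
Lemma even_exit Ta Tb v w : 3 <= n -> cnt0 Ta = cnt1 Ta ->
  v \in Ta -> w \in Tb -> ~~ par v -> hadj v w -> unique_cross_edge Ta Tb v w ->
  exists x y, [/\ x \in Ta, ~~ par x, y \notin Ta :|: Tb & hadj x y].
Proof.
move=> n3 balA vA wB pv hvw cross.
have [/existsP [x /andP [xA /existsP [y /and3P [px yT hxy]]]]|noexit] :=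
  boolP [exists x in Ta, exists y, [&& ~~ par x, y \notin Ta :|: Tb & hadj x y]].
  by exists x, y.
exfalso; pose A0 := [set x in Ta | ~~ par x]; pose A1 := [set x in Ta | par x].
have nbA1 x y : x \in A0 -> hadj x y -> y != w -> y \in A1.
  rewrite inE => /andP [xA px] hxy yw; rewrite inE (par_hadj hxy) px andbT.
  have : y \in Ta :|: Tb.
    apply: contraR noexit => yT; apply/existsP; exists x; rewrite xA.
    by apply/existsP; exists y; rewrite px yT hxy.
  by case/setUP => // yB; case: (cross x y xA yB hxy) => _ /eqP; rewrite (negbTE yw).
have degA0 x : x \in A0 -> n <= deg_in A1 x + (x == v).
  move=> xA0; apply: leq_trans (deg_in_ge (fun y => nbA1 x y xA0)) _; rewrite leq_add2l.
  case hxw: (hadj x w) => //; case/setIdP: xA0 => xA _.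
  by case: (cross x w xA wB hxw) => -> _; rewrite eqxx.
have /hadjP [j wE] := hvw; have [i [k [ij kj ik]]] := two_other_ords j n3.
have flipA1 l : l != j -> flip v l \in A1.
  move=> lj; apply: nbA1 (hadj_flip v l) _; first by rewrite inE vA pv.
  by rewrite wE; apply: contra lj => /eqP /flip_inj ->.
have degA1 l : l != j -> deg_in A0 (flip v l) < n.
  move=> lj; apply: (deg_in_lt (hadj_flip _ j)); rewrite flipC inE.
  apply/andP => -[uA _]; have hwu : hadj w (flip (flip v j) l) by rewrite wE hadj_flip.
  rewrite hadj_sym in hwu; case: (cross _ _ uA wB hwu) => /ffunP /(_ l).
  by rewrite !ffunE eqxx (negbTE lj); case: (v l).
have ab : flip v i != flip v k by apply: contra ik => /eqP /flip_inj ->.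
have lower : #|A0| * n <= \sum_(x in A0) deg_in A1 x + 1.
  rewrite -sum_nat_const -(sum_eq_pred1 (_ : v \in A0)) ?inE ?vA // -big_split.
  by apply: leq_sum => x; apply: degA0.
have upper : \sum_(y in A1) deg_in A0 y + 1 + 1 <= #|A1| * n.
  rewrite -sum_nat_const -{1}(sum_eq_pred1 (flipA1 i ij)).
  rewrite -(sum_eq_pred1 (flipA1 k kj)) -!big_split; apply: leq_sum => y _ /=.
  case: (eqVneq y (flip v i)) => [->|yi].
    by rewrite (negbTE ab) /= addn0 addn1 degA1.
  case: (eqVneq y (flip v k)) => [->|yk]; first by rewrite addn0 addn1 degA1.
  by rewrite !addn0 deg_in_le.
rewrite sum_deg_in (_ : #|A0| = #|A1|) // in lower.
by have := leq_trans upper lower; rewrite -addnA leq_add2l.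
Qed.

Lemma not_minimal_of_even_exit F Ta Tb v w x y :
  even_boundary_in F (Ta :|: Tb) -> [disjoint Ta & Tb] -> cnt0 Tb = cnt1 Tb ->
  w \in Tb -> par w -> unique_cross_edge Ta Tb v w ->
  x \in Ta -> ~~ par x -> y \notin Ta :|: Tb -> hadj x y -> not_minimal F.
Proof.
move=> FT disAB balB wB pw cross xA px yT hxy.
pose A0 := [set z in Ta | ~~ par z].
exists [set e in F | [disjoint e & A0]]; split.
  apply/properP; split; first by apply/subsetP => e; rewrite inE => /andP [].
  exists [set x; y]; first by apply: FT; rewrite // inE xA.
  rewrite inE negb_and; apply/orP; right; apply/pred0Pn.
  by exists x; rewrite /= !inE eqxx xA px.
apply: (@even_boundary_not_hamiltonian _ _ Tb w y) => //.
- by apply: contra yT => yB; apply/setUP; right.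
- by rewrite balB.
move=> x' y' xB px' yB hxy'.
have yA : y' \notin Ta.
  apply/negP => yA; rewrite hadj_sym in hxy'.
  by case: (cross y' x' yA xB hxy') => _ xw; rewrite xw pw in px'.
rewrite inE; apply/andP; split.
  by apply: FT; rewrite // !inE ?xB ?orbT // negb_or yA.
apply/pred0P => z; rewrite !inE; apply/andP => -[/orP [] /eqP -> /andP [zA _]].
  by rewrite (disjointFr disAB zA) in xB.
by rewrite zA in yA.
Qed.

Lemma unique_cross_edgeC Ta Tb v w :
  unique_cross_edge Ta Tb v w -> unique_cross_edge Tb Ta w v.
Proof.
by move=> cross b a bB aA; rewrite hadj_sym => /(cross a b aA bB) [-> ->].
Qed.

Lemma not_minimal_of_unique_cross_edge F Ta Tb v w : 3 <= n ->
  even_boundary_in F (Ta :|: Tb) -> [disjoint Ta & Tb] ->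
  cnt0 Ta = cnt1 Ta -> cnt0 Tb = cnt1 Tb -> v \in Ta -> w \in Tb -> hadj v w ->
  unique_cross_edge Ta Tb v w -> not_minimal F.
Proof.
wlog pv : Ta Tb v w / ~~ par v.
  move=> main n3 FT dis balA balB vA wB hvw cross.
  case pv: (par v); last exact: main (negbT pv) n3 FT dis balA balB vA wB hvw cross.
  apply: (main Tb Ta w v) => //.
  - by rewrite (par_hadj hvw) pv.
  - by rewrite setUC.
  - by rewrite disjoint_sym.
  - by rewrite hadj_sym.
  - exact: unique_cross_edgeC.
move=> n3 FT dis balA balB vA wB hvw cross.
have [x [y [xA px yT hxy]]] := even_exit n3 balA vA wB pv hvw cross.
apply: not_minimal_of_even_exit FT dis balB wB _ cross xA px yT hxy.
by rewrite (par_hadj hvw) pv.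
Qed.

End UniqueCrossEdge.

Lemma zip_cons_cat (T : Type) (x : T) p q :
  zip (x :: p ++ q) (p ++ q) = zip (x :: p) p ++ zip (last x p :: q) q.
Proof. by elim: p x => [|y p IH] x //=; rewrite IH. Qed.

Section Bridge.
Variable n : nat.
Implicit Types (x y u w : vert n) (S : {set vert n}) (p : seq (vert n)).

Lemma sub_induced S S' : S \subset S' -> subrel (induced S) (induced S').
Proof.
by move=> /subsetP sSS' x y /and3P [hxy xS yS]; rewrite /induced hxy !sSS'.
Qed.

Lemma path_induced_edge_mem S x p u w : path (induced S) x p ->
  has (fun xy : vert n * vert n => [set xy.1; xy.2] == [set u; w]) (zip (x :: p) p) ->
  (u \in S) && (w \in S).
Proof.
elim: p x => [|y p IH] x //= /andP [/and3P [_ xS yS] xp] /orP [/eqP E|]; last exact: IH.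
by rewrite -!sub1set -subUset -E subUset !sub1set xS yS.
Qed.

Lemma unique_cross_edge_of_bridge (T1 T2 : {set vert n}) v1 v2 :
  [disjoint T1 & T2] -> induced_connected T1 -> induced_connected T2 ->
  v1 \in T1 -> v2 \in T2 ->
  (forall p, path (induced (T1 :|: T2)) v1 p -> last v1 p = v2 ->
     has (fun xy : vert n * vert n => [set xy.1; xy.2] == [set v1; v2])
         (zip (v1 :: p) p)) ->
  unique_cross_edge T1 T2 v1 v2.
Proof.
move=> dis conn1 conn2 v1A v2B bridge a b aA bB hab.
have [p1 path1 last1] := connectP (conn1 _ _ v1A aA).
have [p2 path2 last2] := connectP (conn2 _ _ bB v2B).
have path12 : path (induced (T1 :|: T2)) v1 (p1 ++ b :: p2).
  rewrite cat_path (sub_path (sub_induced (subsetUl T1 T2)) path1) -last1 /=.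
  rewrite {1}/induced hab !inE aA bB orbT /=.
  exact: sub_path (sub_induced (subsetUr T1 T2)) _ _ path2.
have last12 : last v1 (p1 ++ b :: p2) = v2 by rewrite last_cat -last1 last2.
move: (bridge _ path12 last12); rewrite zip_cons_cat -last1 has_cat /=.
case/or3P => [/(path_induced_edge_mem path1)/andP [_ v2A]|/eqP E|].
- by rewrite (disjointFl dis v2B) in v2A.
- split.
    have : v1 \in [set a; b] by rewrite E set21.
    rewrite !inE => /orP [/eqP -> //|/eqP v1b].
    by rewrite -v1b (disjointFr dis v1A) in bB.
  have : v2 \in [set a; b] by rewrite E set22.
  rewrite !inE => /orP [/eqP v2a|/eqP -> //].
  by rewrite -v2a (disjointFl dis v2B) in aA.
- case/(path_induced_edge_mem path2)/andP => v1B _.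
  by rewrite (disjointFr dis v1A) in v1B.
Qed.

End Bridge.

Theorem lemma4 (n : nat) (F : {set {set vert n}}) (T T1 T2 : {set vert n})
  (v1 v2 : vert n) :
  3 <= n ->
  (forall e, e \in F -> is_qedge e) ->
  T \proper [set: vert n] ->
  3 <= #|T| ->
  cnt1 T <= cnt0 T ->
  (forall x y, x \in T -> ~~ par x -> y \notin T -> hadj x y -> [set x; y] \in F) ->
  T1 :|: T2 = T -> [disjoint T1 & T2] ->
  induced_connected T1 -> induced_connected T2 ->
  cnt0 T1 = cnt1 T1 -> cnt0 T2 = cnt1 T2 ->
  v1 \in T1 -> v2 \in T2 -> hadj v1 v2 ->
  (forall p : seq (vert n), path (induced T) v1 p -> last v1 p = v2 ->
     has (fun xy : vert n * vert n => [set xy.1; xy.2] == [set v1; v2])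
         (zip (v1 :: p) p)) ->
  not_minimal F.
Proof.
move=> n3 _ _ _ _ FT TU dis conn1 conn2 bal1 bal2 v1A v2B hv bridge.
apply: (not_minimal_of_unique_cross_edge n3 _ dis bal1 bal2 v1A v2B hv).
  by rewrite TU.
by apply: unique_cross_edge_of_bridge; rewrite ?TU.
Qed.
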